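(* Let $s\ge 2$, $q=s-1$, and let $c_1,\dots,c_s$ be pairwise distinct real nodes. Let $A,K\in\mathbb{R}^{s\times s}$ and let $B(\sigma)\in\mathbb{R}^{s\times s}$ be given for all $\sigma$ in a set $\Sigma\subset(0,\infty)$ with $1\in\Sigma$, such that for all $\sigma\in\Sigma$ the standard-method order conditions $$AV_q-KV_q\tilde E_q=B(\sigma)V_q\mathcal{P}_q^{-1}S_q(\sigma)^{-1},\qquad A^{\mathsf T}V_q+KV_q\tilde E_q=B(\sigma)^{\mathsf T}V_qS_q(\sigma)\mathcal{P}_q$$ hold, and assume moreover $\mathcal{Q}_{q,q}(1)=e_1e_1^{\mathsf T}\in\mathbb{R}^{q\times q}$. Let $A_0,A_N\in\mathbb{R}^{s\times s}$, $a,w\in\mathbb{R}^s$ and $\sigma_1,\sigma_N\in\Sigma$ be such that $$A_0V_q=a\,e_1^{\mathsf T}+KV_q\tilde E_q,\qquad A_0^{\mathsf T}V_q+KV_q\tilde E_q=B(\sigma_1)^{\mathsf T}V_qS_q(\sigma_1)\mathcal{P}_q,$$ $$A_NV_q-KV_q\tilde E_q=B(\sigma_N)V_q\mathcal{P}_q^{-1}S_q(\sigma_N)^{-1},\qquad A_N^{\mathsf T}V_q+KV_q\tilde E_q=w\,\mathbb{1}_q^{\mathsf T}.$$ Then $a=A_0\mathbb{1}_s$, $w=A_N^{\mathsf T}\mathbb{1}_s$, and there exist vectors $\phi_0,\phi_N\in\mathbb{R}^s$ such that $$A_0=A+V_s^{-\mathsf T}e_s\,\phi_0^{\mathsf T}V_s^{-1},\qquad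 A_N=A+\phi_N\,e_s^{\mathsf T}V_s^{-1},$$ and, for $j=2,\dots,q$, $$e_j^{\mathsf T}\phi_0=-e_s^{\mathsf T}\mathcal{Q}_{s,q}(1)e_j,\qquad \phi_N^{\mathsf T}V_q\mathcal{P}_q^{-1}e_j=-\hat b_{js}(1),$$ where $\hat b_{js}(1)$ denotes the $(j,s)$ entry of $\hat B(1)=V_s^{\mathsf T}B(1)V_s$.
   Context: Notation: $e_i$ is the $i$-th cardinal basis vector (of the dimension dictated by context), $\mathbb{1}_k=(1,\dots,1)^{\mathsf T}\in\mathbb{R}^k$. For the nodes $\mathbf{c}=(c_1,\dots,c_s)^{\mathsf T}$, $\mathbf{c}^k=(c_1^k,\dots,c_s^k)^{\mathsf T}$, and for $r\le s$ the Vandermonde matrix is $V_r=(\mathbb{1},\mathbf{c},\dots,\mathbf{c}^{r-1})\in\mathbb{R}^{s\times r}$. The Pascal matrix is $\mathcal{P}_r=\big(\binom{j-1}{i-1}\big)_{i,j=1}^r$, the scaled shift matrix is $\tilde E_r=(i\,\delta_{i+1,j})_{i,j=1}^r$, and $S_r(\sigma)=\mathrm{diag}(1,\sigma,\dots,\sigma^{r-1})$. For $r,r'\le s$, $\mathcal{Q}_{r,r'}(\sigma):=V_r^{\mathsf T}B(\sigma)V_{r'}\mathcal{P}_{r'}^{-1}\in\mathbb{R}^{r\times r'}$. These are the order conditions of order $q$ for a Peer two-step method $A Y_n=B(\sigma_n)Y_{n-1}+h_nKF(Y_n)$ with stepsize ratio $\sigma_n=h_n/h_{n-1}$, its discrete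 adjoint, a starting step $A_0Y_0=a\otimes y_0+h_0KF(Y_0)$ and an end step with matrix $A_N$ and output weight $w$. *)

From HB Require Import structures.
From mathcomp Require Import all_boot all_order all_algebra.
From mathcomp Require Import all_reals.
Set Implicit Arguments. Unset Strict Implicit. Unset Printing Implicit Defensive.
Import Order.TTheory GRing.Theory Num.Theory.
Local Open Scope ring_scope.

Section PeerDefs.
Variable R : realType.

Definition vdm (s r : nat) (c : 'cV[R]_s) : 'M[R]_(s, r) :=
  \matrix_(i < s, j < r) (c i 0) ^+ j.

(* Pascal matrix P_r = (binom(j-1, i-1))_{i,j=1..r}; 0-indexed: binom(j, i) *)
Definition pascal (r : nat) : 'M[R]_r := \matrix_(i < r, j < r) ('C(j, i))%:R.

(* Scaled shift E~_r = (i delta_{i+1,j}); 0-indexed: entry (i,j) = (i+1) if j = i+1 *)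
Definition Etilde (r : nat) : 'M[R]_r :=
  \matrix_(i < r, j < r) (if j == i.+1 :> nat then (i.+1)%:R else 0).

Definition Smat (r : nat) (sigma : R) : 'M[R]_r :=
  \matrix_(i < r, j < r) (if i == j then sigma ^+ i else 0).

Definition Qmat (s r r' : nat) (c : 'cV[R]_s) (B : R -> 'M[R]_s) (sigma : R)
  : 'M[R]_(r, r') :=
  (vdm r c)^T *m B sigma *m vdm r' c *m invmx (pascal r').

Definition Bhat (s : nat) (c : 'cV[R]_s) (B : R -> 'M[R]_s) (sigma : R) : 'M[R]_s :=
  (vdm s c)^T *m B sigma *m vdm s c.

End PeerDefs.

From HB Require Import structures.
From mathcomp Require Import all_boot all_order all_algebra.
From mathcomp Require Import all_reals.
Set Implicit Arguments. Unset Strict Implicit. Unset Printing Implicit Defensive.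
Import Order.TTheory GRing.Theory Num.Theory.
Local Open Scope ring_scope.

(* The matrix A satisfies both order conditions, so subtracting it from the
   adjoint condition of the starting step at sigma_1 gives (A_0 - A)^T V_q = 0,
   and from the forward condition of the end step at sigma_N gives
   (A_N - A) V_q = 0.  As V_q consists of the first q columns of the invertible
   V_s, the matrices V_s^T (A_0 - A) V_s and (A_N - A) V_s are supported on
   their last row resp. column, which is the rank-one form of A_0 and A_N.
   The entries of phi_0 and phi_N come from testing the start and end
   conditions against e_j, j >= 2, using e_1^T e_j = 0 and 1^T P_q^-1 = e_1^T. *)

Section MatrixFacts.
Variable R : realType.

Lemma vdm_unit m (c : 'cV[R]_m) :
  injective (fun i : 'I_m => c i 0) -> vdm m c \in unitmx.
Proof.
move=> c_inj; have -> : vdm m c = (Vandermonde m c^T)^T.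
  by apply/matrixP => i j; rewrite !mxE.
rewrite unitmx_tr unitmxE det_Vandermonde unitfE.
apply/prodf_neq0 => i _; apply/prodf_neq0 => j lt_ij.
rewrite !mxE subr_eq0; apply/eqP => /c_inj eq_ji.
by move: lt_ij; rewrite eq_ji ltnn.
Qed.

Lemma pascal_unit r : pascal R r \in unitmx.
Proof.
rewrite -unitmx_tr unitmxE det_trig; last first.
  by apply/is_trig_mxP => i j lt_ij; rewrite !mxE bin_small.
by rewrite unitfE; apply/prodf_neq0 => i _; rewrite !mxE binn oner_neq0.
Qed.

Lemma Smat1 r : Smat r (1 : R) = 1%:M.
Proof. by apply/matrixP => i j; rewrite !mxE expr1n; case: (i == j). Qed.

Lemma vdm_col0 s r (c : 'cV[R]_s) :
  vdm r.+1 c *m delta_mx 0 (0 : 'I_1) = const_mx 1.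
Proof. by rewrite -colE; apply/matrixP => i k; rewrite !mxE. Qed.

Lemma vdm_col_widen s r r' (c : 'cV[R]_s) (le_rr' : (r <= r')%N) (j : 'I_r) :
  vdm r' c *m delta_mx (widen_ord le_rr' j) (0 : 'I_1)
    = vdm r c *m delta_mx j 0.
Proof. by rewrite -!colE; apply/matrixP => i k; rewrite !mxE. Qed.

Lemma Etilde_col0 r : Etilde R r.+1 *m delta_mx 0 (0 : 'I_1) = 0.
Proof. by rewrite -colE; apply/matrixP => i k; rewrite !mxE. Qed.

Lemma const_mx1_mul_invmx_pascal r :
  const_mx 1 *m invmx (pascal R r.+1) = delta_mx (0 : 'I_1) 0.
Proof.
have <- : delta_mx (0 : 'I_1) 0 *m pascal R r.+1 = const_mx 1.
  by rewrite -rowE; apply/matrixP => i j; rewrite !mxE bin0.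
by rewrite mulmxK ?pascal_unit.
Qed.

Lemma delta_mul_mx_delta m p (X : 'M[R]_(m, p)) i k :
  delta_mx (0 : 'I_1) i *m X *m delta_mx k (0 : 'I_1) = (X i k)%:M.
Proof. by rewrite -rowE -colE; apply/matrixP => x y; rewrite !ord1 !mxE. Qed.

Lemma delta_mx11 : delta_mx 0 0 = 1%:M :> 'M[R]_1.
Proof. by apply/matrixP => x y; rewrite !ord1 !mxE. Qed.

Lemma const_mx1_mul_delta r (i : 'I_r) :
  const_mx 1 *m delta_mx i (0 : 'I_1) = 1%:M :> 'M[R]_1.
Proof. by rewrite -colE; apply/matrixP => x y; rewrite !ord1 !mxE. Qed.

Lemma trmx11 (X : 'M[R]_1) : X^T = X.
Proof. by apply/matrixP => x y; rewrite !ord1 !mxE. Qed.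

Lemma col_ord_max_supported p r (X : 'M[R]_(p, r.+1)) :
  (forall j : 'I_r, X *m delta_mx (widen_ord (leqnSn r) j) (0 : 'I_1) = 0) ->
  X = col ord_max X *m delta_mx 0 ord_max.
Proof.
move=> X0; apply/matrixP => i k; rewrite !mxE big_ord1 !mxE eqxx /=.
case: (unliftP ord_max k) => [j ->|->]; last by rewrite eqxx mulr1.
rewrite eq_sym (negbTE (neq_lift _ _)) mulr0.
have -> : lift ord_max j = widen_ord (leqnSn r) j by apply/val_inj/lift_max.
by have /matrixP/(_ i 0) := X0 j; rewrite -colE !mxE.
Qed.

End MatrixFacts.

Section PeerMatrices.
Variables (R : realType) (n : nat) (c : 'cV[R]_n.+2).

Local Notation V := (vdm n.+2 c).
Local Notation Vq := (vdm n.+1 c).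
Local Notation P := (pascal R n.+1).
Local Notation E := (Etilde R n.+1).

Definition peer_order_cond (A K Bs : 'M[R]_n.+2) (sigma : R) :=
  A *m Vq - K *m Vq *m E = Bs *m Vq *m invmx P *m invmx (Smat n.+1 sigma).

Definition adjoint_order_cond (A K Bs : 'M[R]_n.+2) (sigma : R) :=
  A^T *m Vq + K *m Vq *m E = Bs^T *m Vq *m Smat n.+1 sigma *m P.

Lemma peer_order_cond_uniq A A' K Bs sigma :
  peer_order_cond A K Bs sigma -> peer_order_cond A' K Bs sigma ->
  (A' - A) *m Vq = 0.
Proof.
move=> hA hA'; apply/eqP; rewrite mulmxBl subr_eq0; apply/eqP.
by apply: (addIr (- (K *m Vq *m E))); rewrite hA hA'.
Qed.

Lemma adjoint_order_cond_uniq A A' K Bs sigma :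
  adjoint_order_cond A K Bs sigma -> adjoint_order_cond A' K Bs sigma ->
  (A' - A)^T *m Vq = 0.
Proof.
move=> hA hA'; apply/eqP; rewrite linearB mulmxBl subr_eq0; apply/eqP.
by apply: (addIr (K *m Vq *m E)); rewrite hA hA'.
Qed.

Hypothesis c_inj : injective (fun i : 'I_n.+2 => c i 0).

Let V_unit : V \in unitmx := vdm_unit c_inj.

Lemma mulmx_vdm_supported p (M : 'M[R]_(p, n.+2)) :
  M *m Vq = 0 -> M *m V = col ord_max (M *m V) *m delta_mx 0 ord_max.
Proof.
move=> M0; apply: col_ord_max_supported => j.
by rewrite -mulmxA vdm_col_widen mulmxA M0 mul0mx.
Qed.

Definition phi_start (A A0 : 'M[R]_n.+2) : 'cV[R]_n.+2 :=
  col ord_max (V^T *m (A0 - A)^T *m V).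

Definition phi_end (A AN : 'M[R]_n.+2) : 'cV[R]_n.+2 :=
  col ord_max ((AN - A) *m V).

Lemma tr_phi_start A A0 :
  (phi_start A A0)^T = delta_mx 0 ord_max *m V^T *m (A0 - A) *m V.
Proof. by rewrite tr_col rowE !trmx_mul !trmxK !mulmxA. Qed.

Lemma tr_phi_end A AN :
  (phi_end A AN)^T = delta_mx 0 ord_max *m V^T *m (AN - A)^T.
Proof. by rewrite tr_col rowE trmx_mul mulmxA. Qed.

Lemma start_step_form A A0 :
  (A0 - A)^T *m Vq = 0 ->
  A0 = A + (invmx V)^T *m delta_mx ord_max 0 *m (phi_start A A0)^T *m invmx V.
Proof.
move=> M0.
have : V^T *m (A0 - A)^T *m Vq = 0 by rewrite -mulmxA M0 mulmx0.
move=> /mulmx_vdm_supported /(congr1 trmx).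
rewrite -/(phi_start A A0) !trmx_mul trmx_delta !trmxK => hM.
rewrite -(mulmxA _ (delta_mx _ _)) -hM !mulmxA mulmxK // trmx_inv.
by rewrite mulVmx ?unitmx_tr // mul1mx addrC subrK.
Qed.

Lemma end_step_form A AN :
  (AN - A) *m Vq = 0 ->
  AN = A + phi_end A AN *m delta_mx 0 ord_max *m invmx V.
Proof. by move=> /mulmx_vdm_supported <-; rewrite mulmxK // addrC subrK. Qed.

Section StartStep.
Variables (A K A0 : 'M[R]_n.+2) (B : R -> 'M[R]_n.+2) (a : 'cV[R]_n.+2).
Hypothesis hA : peer_order_cond A K (B 1) 1.
Hypothesis hA0 : A0 *m Vq = a *m delta_mx 0 0 + K *m Vq *m E.

Lemma start_weight : a = A0 *m const_mx 1.
Proof.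
rewrite -(vdm_col0 n c) mulmxA hA0 mulmxDl -!mulmxA mul_delta_mx delta_mx11.
by rewrite Etilde_col0 !mulmx0 addr0 mulmx1.
Qed.

Lemma start_residual (j : 'I_n.+1) : (0 < j)%N ->
  (A0 - A) *m Vq *m delta_mx j (0 : 'I_1)
    = - (B 1 *m Vq *m invmx P *m delta_mx j 0).
Proof.
move=> j_gt0.
have hA' : A *m Vq = B 1 *m Vq *m invmx P + K *m Vq *m E.
  by move: hA; rewrite /peer_order_cond Smat1 invmx1 mulmx1 => <-; rewrite subrK.
rewrite mulmxBl hA0 hA' opprD addrACA subrr addr0 mulmxDl mulNmx -mulmxA.
by rewrite mul_delta_mx_0 ?mulmx0 ?add0r // -(inj_eq val_inj) eq_sym -lt0n.
Qed.

Lemma phi_start_entry (j : 'I_n.+1) : (0 < j)%N ->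
  (delta_mx 0 (widen_ord (leqnSn _) j) *m phi_start A A0 : 'M[R]_1)
    = - (delta_mx 0 ord_max *m Qmat n.+2 n.+1 c B 1 *m delta_mx j 0).
Proof.
move=> j_gt0.
rewrite -[LHS]trmx11 trmx_mul trmx_delta tr_phi_start.
have -> : delta_mx (0 : 'I_1) ord_max *m V^T *m (A0 - A) *m V
            *m delta_mx (widen_ord (leqnSn n.+1) j) (0 : 'I_1)
    = delta_mx (0 : 'I_1) ord_max *m V^T
        *m ((A0 - A) *m Vq *m delta_mx j (0 : 'I_1)).
  by rewrite -!mulmxA vdm_col_widen.
by rewrite start_residual // mulmxN /Qmat !mulmxA.
Qed.

End StartStep.

Section EndStep.
Variables (A K AN : 'M[R]_n.+2) (B : R -> 'M[R]_n.+2) (w : 'cV[R]_n.+2).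
Hypothesis hA : adjoint_order_cond A K (B 1) 1.
Hypothesis hAN : AN^T *m Vq + K *m Vq *m E = w *m const_mx 1.

Let hAN' : AN^T *m Vq = w *m const_mx 1 - K *m Vq *m E.
Proof. by rewrite -hAN addrK. Qed.

Lemma end_weight : w = AN^T *m const_mx 1.
Proof.
rewrite -(vdm_col0 n c) mulmxA hAN' mulmxBl -!mulmxA const_mx1_mul_delta.
by rewrite Etilde_col0 !mulmx0 subr0 mulmx1.
Qed.

Lemma end_residual (j : 'I_n.+1) : (0 < j)%N ->
  (AN - A)^T *m Vq *m invmx P *m delta_mx j 0
    = - ((B 1)^T *m Vq *m delta_mx j (0 : 'I_1)).
Proof.
move=> j_gt0.
have hA' : A^T *m Vq = (B 1)^T *m Vq *m P - K *m Vq *m E.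
  by move: hA; rewrite /adjoint_order_cond Smat1 mulmx1 => <-; rewrite addrK.
rewrite linearB /= mulmxBl hAN' hA' opprB addrA subrK !mulmxBl.
rewrite mulmxK ?pascal_unit // -(mulmxA w) const_mx1_mul_invmx_pascal.
rewrite -(mulmxA w) mul_delta_mx_0 ?mulmx0 ?sub0r //.
by rewrite -(inj_eq val_inj) eq_sym -lt0n.
Qed.

Lemma phi_end_entry (j : 'I_n.+1) : (0 < j)%N ->
  (phi_end A AN)^T *m Vq *m invmx P *m delta_mx j 0
    = - (Bhat c B 1 (widen_ord (leqnSn _) j) ord_max)%:M.
Proof.
move=> j_gt0; rewrite tr_phi_end.
have -> : delta_mx (0 : 'I_1) ord_max *m V^T *m (AN - A)^T *m Vq *m invmx P
            *m delta_mx j (0 : 'I_1)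
    = delta_mx (0 : 'I_1) ord_max *m V^T
        *m ((AN - A)^T *m Vq *m invmx P *m delta_mx j (0 : 'I_1)).
  by rewrite !mulmxA.
rewrite end_residual // mulmxN -(mulmxA _ Vq).
rewrite -(vdm_col_widen c (leqnSn n.+1)).
have -> : delta_mx (0 : 'I_1) ord_max *m V^T *m ((B 1)^T *m (V
            *m delta_mx (widen_ord (leqnSn n.+1) j) (0 : 'I_1)))
    = delta_mx 0 ord_max *m (Bhat c B 1)^T
        *m delta_mx (widen_ord (leqnSn n.+1) j) 0.
  by rewrite /Bhat !trmx_mul trmxK !mulmxA.
by rewrite delta_mul_mx_delta mxE.
Qed.

End EndStep.

End PeerMatrices.

Theorem lemma1 (R : realType) (n : nat) (c : 'cV[R]_(n.+2))
  (Sigma : R -> Prop) (A K : 'M[R]_(n.+2)) (B : R -> 'M[R]_(n.+2))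
  (A0 AN : 'M[R]_(n.+2)) (a w : 'cV[R]_(n.+2)) (sigma1 sigmaN : R) :
  injective (fun i : 'I_(n.+2) => c i 0) ->
  (forall sigma, Sigma sigma -> 0 < sigma) ->
  Sigma 1 ->
  (forall sigma, Sigma sigma ->
     A *m vdm n.+1 c - K *m vdm n.+1 c *m Etilde R n.+1
       = B sigma *m vdm n.+1 c *m invmx (pascal R n.+1) *m invmx (Smat n.+1 sigma)
  /\ A^T *m vdm n.+1 c + K *m vdm n.+1 c *m Etilde R n.+1
       = (B sigma)^T *m vdm n.+1 c *m Smat n.+1 sigma *m pascal R n.+1) ->
  Qmat n.+1 n.+1 c B 1 = delta_mx 0 0 ->
  Sigma sigma1 -> Sigma sigmaN ->
  A0 *m vdm n.+1 c = a *m delta_mx 0 0 + K *m vdm n.+1 c *m Etilde R n.+1 ->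
  A0^T *m vdm n.+1 c + K *m vdm n.+1 c *m Etilde R n.+1
    = (B sigma1)^T *m vdm n.+1 c *m Smat n.+1 sigma1 *m pascal R n.+1 ->
  AN *m vdm n.+1 c - K *m vdm n.+1 c *m Etilde R n.+1
    = B sigmaN *m vdm n.+1 c *m invmx (pascal R n.+1) *m invmx (Smat n.+1 sigmaN) ->
  AN^T *m vdm n.+1 c + K *m vdm n.+1 c *m Etilde R n.+1
    = w *m const_mx 1 ->
  a = A0 *m const_mx 1 /\ w = AN^T *m const_mx 1 /\
  exists phi0 phiN : 'cV[R]_(n.+2),
    A0 = A + (invmx (vdm n.+2 c))^T *m delta_mx ord_max 0 *m phi0^T
             *m invmx (vdm n.+2 c) /\
    AN = A + phiN *m delta_mx 0 ord_max *m invmx (vdm n.+2 c) /\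
    (forall j : 'I_(n.+1), (0 < j)%N ->
       (delta_mx 0 (widen_ord (leqnSn _) j) *m phi0 : 'M[R]_1)
         = - (delta_mx 0 ord_max *m Qmat n.+2 n.+1 c B 1 *m delta_mx j 0) /\
       phiN^T *m vdm n.+1 c *m invmx (pascal R n.+1) *m delta_mx j 0
         = - (Bhat c B 1 (widen_ord (leqnSn _) j) ord_max)%:M).
Proof.
move=> c_inj _ S1 hO _ s1 sN hA0 hA0adj hAN hANadj.
have [hA1 hA1adj] := hO 1 S1.
have e0 : (A0 - A)^T *m vdm n.+1 c = 0.
  exact: adjoint_order_cond_uniq (hO _ s1).2 hA0adj.
have eN : (AN - A) *m vdm n.+1 c = 0.
  exact: peer_order_cond_uniq (hO _ sN).1 hAN.
split; first exact: start_weight hA0.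
split; first exact: end_weight hANadj.
exists (phi_start c A A0), (phi_end c A AN).
split; first by apply: (start_step_form c_inj e0).
split; first by apply: (end_step_form c_inj eN).
move=> j j_gt0; split.
  by apply: (phi_start_entry hA1 hA0 j_gt0).
by apply: (phi_end_entry hA1adj hANadj j_gt0).
Qed.
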